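(* Let $n\ge 1$, let $a_1<a_2$ be constants, and let $f$ be continuous on $(0,\infty)$ with $f(t)\to 0$ as $t\to\infty$. Assume that for every constant $c\in[a_1,a_2]$, every nontrivial solution of $y''+\frac{n-1}{t}y'+\frac{c}{t^2}y=0$ has infinitely many roots (in $(T,\infty)$ for every $T>0$). Then for every constant $a\in(a_1,a_2)$, every nontrivial solution of \[ y''+\frac{n-1}{t}y'+\frac{a+f(t)}{t^2}y=0 \] has infinitely many roots (in $(T,\infty)$ for every $T>0$). *)

From Stdlib Require Import Reals.
Open Scope R_scope.

Definition is_solution (n : nat) (q : R -> R) (y : R -> R) : Prop :=
  exists y1 y2 : R -> R,
    forall t, 0 < t ->
      derivable_pt_lim y t (y1 t) /\
      derivable_pt_lim y1 t (y2 t) /\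
      y2 t + (INR n - 1) / t * y1 t + q t / (t ^ 2) * y t = 0.

Definition nontrivial (y : R -> R) : Prop := exists t, 0 < t /\ y t <> 0.

Definition oscillatory (y : R -> R) : Prop :=
  forall T, 0 < T -> exists t, T < t /\ y t = 0.

(* Write nu = (n-2)/2, so that the equation reads y'' + (2 nu + 1)/t y' + q/t^2 y = 0.
   The Euler equation with constant q = c has the positive solution t^r,
   r^2 + 2 nu r + c = 0, as soon as c <= nu^2; oscillation at c = a1 therefore
   forces a1 > nu^2, and then q = a + f >= nu^2 + d with d = a1 - nu^2 > 0 for
   large t.  In the variable s = ln t, u = t^nu y satisfies u'' = (nu^2 - q) u.
   If u > 0 on a half-line, then u'' <= 0, so u' >= 0 (a negative u' would make
   u decrease linearly in s); hence u >= u(s0) and u'' <= -d u(s0), which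
   eventually makes u' negative. *)

From Stdlib Require Import Reals Lra Classical.
From Coquelicot Require Import Coquelicot.
Open Scope R_scope.

Definition nu (n : nat) : R := (INR n - 2) / 2.

Lemma INR_sub_1_nu (n : nat) : INR n - 1 = 2 * nu n + 1.
Proof. unfold nu; field. Qed.

Lemma Rpower_pos (t m : R) : 0 < Rpower t m.
Proof. apply exp_pos. Qed.

Lemma derivable_pt_lim_Rpower (m t : R) :
  0 < t -> derivable_pt_lim (fun s => Rpower s m) t (Rpower t m * (m / t)).
Proof.
  intros Ht; apply is_derive_Reals; unfold Rpower.
  auto_derive; [lra | field; lra].
Qed.

Lemma nonincreasing_of_derive_nonpos (h h' : R -> R) (a b : R) :
  a <= b ->
  (forall c, a <= c <= b -> derivable_pt_lim h c (h' c)) ->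
  (forall c, a <= c <= b -> h' c <= 0) ->
  h b <= h a.
Proof.
  intros Hab Hd Hneg.
  destruct (Req_dec a b) as [<- | Hne]; [lra |].
  destruct (MVT_cor2 h h' a b ltac:(lra) Hd) as [c [Hc Hc']].
  assert (h' c * (b - a) <= 0) by (apply Rmult_le_0_r; [apply Hneg | ]; lra).
  lra.
Qed.

Lemma exists_neg_of_derive_le_neg_div (h h' : R -> R) (k t0 : R) :
  0 < t0 -> 0 < k ->
  (forall t, t0 <= t -> derivable_pt_lim h t (h' t)) ->
  (forall t, t0 <= t -> h' t <= - k / t) ->
  exists t, t0 <= t /\ h t < 0.
Proof.
  intros Ht0 Hk Hd Hle.
  set (x := Rabs (h t0) / k + 1).
  assert (Hx : 1 <= x) by (unfold x; pose proof (Rabs_pos (h t0));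
    assert (0 <= Rabs (h t0) / k) by (apply Rdiv_le_0_compat; lra); lra).
  assert (Hexp : 1 <= exp x) by (pose proof (exp_ineq1_le x); lra).
  set (t := t0 * exp x).
  assert (Ht : t0 <= t) by (unfold t; pose proof (Rmult_le_compat_l t0 1 (exp x)); lra).
  exists t; split; [exact Ht |].
  assert (Hmono : h t + k * ln t <= h t0 + k * ln t0).
  { apply (nonincreasing_of_derive_nonpos (fun s => h s + k * ln s)
             (fun s => h' s + k * / s) t0 t Ht).
    - intros c Hc. apply derivable_pt_lim_plus; [apply Hd; lra |].
      apply derivable_pt_lim_scal, derivable_pt_lim_ln; lra.
    - intros c Hc. specialize (Hle c ltac:(lra)).
      replace (- k / c) with (- (k * / c)) in Hle by (field; lra). lra. }
  assert (Hln : ln t = ln t0 + x)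
    by (unfold t; rewrite ln_mult, ln_exp; [reflexivity | lra | apply exp_pos]).
  rewrite Hln in Hmono.
  assert (k * x = Rabs (h t0) + k) by (unfold x; field; lra).
  pose proof (Rle_abs (h t0)). nra.
Qed.

(* In the variable s = ln t the hypotheses read U' = G, G' <= - d U. *)
Lemma no_positive_log_supersolution (U G G' : R -> R) (d t0 : R) :
  0 < t0 -> 0 < d ->
  (forall t, t0 <= t -> derivable_pt_lim U t (G t / t)) ->
  (forall t, t0 <= t -> derivable_pt_lim G t (G' t)) ->
  (forall t, t0 <= t -> G' t <= - d * U t / t) ->
  ~ (forall t, t0 <= t -> 0 < U t).
Proof.
  intros Ht0 Hd dU dG HG' Hpos.
  assert (G'_neg : forall t, t0 <= t -> G' t <= 0).
  { intros t Ht. specialize (HG' t Ht). specialize (Hpos t Ht).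
    assert (0 <= d * U t / t) by (apply Rdiv_le_0_compat; nra). lra. }
  assert (G_nonneg : forall t, t0 <= t -> 0 <= G t).
  { intros t2 Ht2. apply Rnot_lt_le; intros Hg.
    destruct (exists_neg_of_derive_le_neg_div U (fun t => G t / t) (- G t2) t2)
      as [t [Ht HU]]; try lra.
    - intros t Ht; apply dU; lra.
    - intros t Ht.
      assert (G t <= G t2).
      { apply (nonincreasing_of_derive_nonpos G G' t2 t Ht);
          intros c Hc; [apply dG | apply G'_neg]; lra. }
      unfold Rdiv; rewrite Ropp_involutive.
      apply Rmult_le_compat_r; [left; apply Rinv_0_lt_compat |]; lra.
    - specialize (Hpos t ltac:(lra)); lra. }
  assert (U_ge : forall t, t0 <= t -> U t0 <= U t).
  { intros t Ht.
    enough (- U t <= - U t0) by lra.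
    apply (nonincreasing_of_derive_nonpos (fun s => - U s) (fun s => - (G s / s)) t0 t Ht).
    - intros c Hc; apply derivable_pt_lim_opp, dU; lra.
    - intros c Hc. enough (0 <= G c / c) by lra.
      apply Rdiv_le_0_compat; [apply G_nonneg |]; lra. }
  pose proof (Hpos t0 (Rle_refl t0)) as HU0.
  destruct (exists_neg_of_derive_le_neg_div G G' (d * U t0) t0) as [t [Ht HG]];
    try assumption.
  - apply Rmult_lt_0_compat; lra.
  - intros t Ht. eapply Rle_trans; [apply HG'; exact Ht |].
    unfold Rdiv; apply Rmult_le_compat_r; [left; apply Rinv_0_lt_compat; lra |].
    specialize (U_ge t Ht). nra.
  - specialize (G_nonneg t Ht); lra.
Qed.

Section LiouvilleTransform.

Variables (n : nat) (q y y1 y2 : R -> R).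

Hypothesis y_ode : forall t, 0 < t ->
  derivable_pt_lim y t (y1 t) /\
  derivable_pt_lim y1 t (y2 t) /\
  y2 t + (INR n - 1) / t * y1 t + q t / t ^ 2 * y t = 0.

Lemma derivable_pt_lim_liouville_U (t : R) : 0 < t ->
  derivable_pt_lim (fun s => Rpower s (nu n) * y s) t
    (Rpower t (nu n) * (nu n * y t + t * y1 t) / t).
Proof.
  intros Ht. destruct (y_ode t Ht) as [dy _].
  replace (Rpower t (nu n) * (nu n * y t + t * y1 t) / t)
    with (Rpower t (nu n) * (nu n / t) * y t + Rpower t (nu n) * y1 t) by (field; lra).
  exact (derivable_pt_lim_mult _ y t _ _ (derivable_pt_lim_Rpower (nu n) t Ht) dy).
Qed.

Lemma derivable_pt_lim_liouville_G (t : R) : 0 < t ->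
  derivable_pt_lim (fun s => Rpower s (nu n) * (nu n * y s + s * y1 s)) t
    (Rpower t (nu n) * y t / t * (nu n * nu n - q t)).
Proof.
  intros Ht. destruct (y_ode t Ht) as [dy [dy1 Hode]].
  set (m := nu n) in *.
  assert (dV : derivable_pt_lim (fun s => m * y s + s * y1 s) t
                 (m * y1 t + (1 * y1 t + t * y2 t))).
  { apply (derivable_pt_lim_plus (fun s => m * y s) (fun s => s * y1 s)).
    - apply derivable_pt_lim_scal, dy.
    - apply (derivable_pt_lim_mult id y1); [apply derivable_pt_lim_id | exact dy1]. }
  pose proof (derivable_pt_lim_mult _ _ t _ _ (derivable_pt_lim_Rpower m t Ht) dV) as H.
  rewrite INR_sub_1_nu in Hode; fold m in Hode.
  replace (y2 t) with (- ((2 * m + 1) / t * y1 t) - q t / t ^ 2 * y t) in H by lra.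
  replace (Rpower t m * y t / t * (m * m - q t)) with
    (Rpower t m * (m / t) * (m * y t + t * y1 t) +
     Rpower t m * (m * y1 t + (1 * y1 t
       + t * (- ((2 * m + 1) / t * y1 t) - q t / t ^ 2 * y t))))
    by (field; lra).
  exact H.
Qed.

End LiouvilleTransform.

Lemma solution_not_eventually_pos (n : nat) (q y : R -> R) (d t0 : R) :
  is_solution n q y -> 0 < t0 -> 0 < d ->
  (forall t, t0 <= t -> nu n ^ 2 + d <= q t) ->
  ~ (forall t, t0 <= t -> 0 < y t).
Proof.
  intros [y1 [y2 Hode]] Ht0 Hd Hq Hpos.
  apply (no_positive_log_supersolution
           (fun t => Rpower t (nu n) * y t)
           (fun t => Rpower t (nu n) * (nu n * y t + t * y1 t))
           (fun t => Rpower t (nu n) * y t / t * (nu n * nu n - q t)) d t0 Ht0 Hd).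
  - intros t Ht; apply (derivable_pt_lim_liouville_U n q y y1 y2); [exact Hode | lra].
  - intros t Ht; apply (derivable_pt_lim_liouville_G n q y y1 y2); [exact Hode | lra].
  - intros t Ht. specialize (Hq t Ht). specialize (Hpos t Ht).
    pose proof (Rpower_pos t (nu n)).
    assert (0 < Rpower t (nu n) * y t / t)
      by (apply Rdiv_lt_0_compat; [apply Rmult_lt_0_compat |]; lra).
    replace (- d * (Rpower t (nu n) * y t) / t)
      with (Rpower t (nu n) * y t / t * - d) by (field; lra).
    apply Rmult_le_compat_l; nra.
  - intros t Ht. apply Rmult_lt_0_compat; [apply Rpower_pos | apply Hpos, Ht].
Qed.

Lemma is_solution_opp (n : nat) (q y : R -> R) :
  is_solution n q y -> is_solution n q (fun t => - y t).
Proof.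
  intros [y1 [y2 Hode]].
  exists (fun t => - y1 t), (fun t => - y2 t).
  intros t Ht. destruct (Hode t Ht) as [dy [dy1 H]].
  split; [| split]; [apply derivable_pt_lim_opp, dy | apply derivable_pt_lim_opp, dy1 | lra].
Qed.

Lemma solution_continuity_pt (n : nat) (q y : R -> R) (t : R) :
  is_solution n q y -> 0 < t -> continuity_pt y t.
Proof.
  intros [y1 [y2 Hode]] Ht.
  apply derivable_continuous_pt. exists (y1 t). apply (Hode t Ht).
Qed.

Lemma pos_of_no_root (y : R -> R) (t0 : R) :
  (forall t, t0 <= t -> continuity_pt y t) ->
  (forall t, t0 <= t -> y t <> 0) ->
  0 < y t0 -> forall t, t0 <= t -> 0 < y t.
Proof.
  intros Hcont Hroot Hy0 t Ht.
  apply Rnot_le_lt; intros Hyt.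
  destruct (Rle_lt_or_eq_dec (y t) 0 Hyt) as [Hneg | Hzero]; [| exact (Hroot t Ht Hzero)].
  destruct (Ranalysis5.IVT_interv (fun s => - y s) t0 t) as [z [Hz Hyz]].
  - intros s Hs; apply continuity_pt_opp, Hcont; lra.
  - destruct Ht as [| <-]; lra.
  - lra.
  - lra.
  - apply (Hroot z); lra.
Qed.

Theorem oscillatory_of_coeff_eventually_above (n : nat) (q y : R -> R) (d : R) :
  is_solution n q y -> 0 < d ->
  (exists M, forall t, M < t -> nu n ^ 2 + d <= q t) ->
  oscillatory y.
Proof.
  intros Hsol Hd [M HM] T HT.
  apply NNPP; intros Hno.
  set (t0 := Rmax T M + 1).
  assert (Ht0 : T < t0 /\ M < t0)
    by (unfold t0; pose proof (Rmax_l T M); pose proof (Rmax_r T M); lra).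
  assert (Hroot : forall t, t0 <= t -> y t <> 0)
    by (intros t Ht Hyt; apply Hno; exists t; split; [lra | exact Hyt]).
  assert (Hq : forall t, t0 <= t -> nu n ^ 2 + d <= q t) by (intros t Ht; apply HM; lra).
  assert (Hcont : forall t, t0 <= t -> continuity_pt y t)
    by (intros t Ht; apply (solution_continuity_pt n q); [exact Hsol | lra]).
  destruct (Rlt_or_le 0 (y t0)) as [Hpos | Hnonpos].
  - apply (solution_not_eventually_pos n q y d t0 Hsol ltac:(lra) Hd Hq).
    exact (pos_of_no_root y t0 Hcont Hroot Hpos).
  - apply (solution_not_eventually_pos n q (fun t => - y t) d t0
             (is_solution_opp n q y Hsol) ltac:(lra) Hd Hq).
    apply pos_of_no_root.
    + intros t Ht; apply continuity_pt_opp, Hcont, Ht.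
    + intros t Ht Hyt; apply (Hroot t Ht); lra.
    + destruct Hnonpos as [| Hzero]; [lra | exfalso; exact (Hroot t0 (Rle_refl t0) Hzero)].
Qed.

Lemma euler_power_solution (n : nat) (c r : R) :
  r * r + 2 * nu n * r + c = 0 ->
  is_solution n (fun _ => c) (fun t => Rpower t r).
Proof.
  intros Hr.
  exists (fun t => Rpower t r * (r / t)), (fun t => Rpower t r * (r * (r - 1)) / (t * t)).
  intros t Ht; split; [| split].
  - apply derivable_pt_lim_Rpower, Ht.
  - apply is_derive_Reals; unfold Rpower. auto_derive; [lra | field; lra].
  - rewrite INR_sub_1_nu.
    replace (Rpower t r * (r * (r - 1)) / (t * t) + (2 * nu n + 1) / t * (Rpower t r * (r / t))
             + c / t ^ 2 * Rpower t r)
      with (Rpower t r / (t * t) * (r * r + 2 * nu n * r + c)) by (field; lra).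
    rewrite Hr; ring.
Qed.

Lemma nu_sqr_lt_of_euler_oscillatory (n : nat) (c : R) :
  (forall y, is_solution n (fun _ => c) y -> nontrivial y -> oscillatory y) ->
  nu n ^ 2 < c.
Proof.
  intros Hosc. apply Rnot_le_lt; intros Hc.
  set (s := sqrt (nu n ^ 2 - c)).
  assert (Hs : s * s = nu n ^ 2 - c) by (apply sqrt_sqrt; lra).
  assert (Hr : (- nu n + s) * (- nu n + s) + 2 * nu n * (- nu n + s) + c = 0) by nra.
  pose proof (euler_power_solution n c _ Hr) as Hsol.
  assert (Hnontriv : nontrivial (fun t => Rpower t (- nu n + s))).
  { exists 1; split; [lra |]. pose proof (Rpower_pos 1 (- nu n + s)); lra. }
  destruct (Hosc _ Hsol Hnontriv 1 Rlt_0_1) as [t [_ Ht]].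
  pose proof (Rpower_pos t (- nu n + s)); lra.
Qed.

Theorem lemma3p3 (n : nat) (a1 a2 : R) (f : R -> R) :
  (1 <= n)%nat ->
  a1 < a2 ->
  (forall t, 0 < t -> continuity_pt f t) ->
  (forall eps, 0 < eps -> exists M, forall t, M < t -> Rabs (f t) < eps) ->
  (forall c, a1 <= c <= a2 ->
     forall y, is_solution n (fun _ => c) y -> nontrivial y -> oscillatory y) ->
  forall a, a1 < a < a2 ->
    forall y, is_solution n (fun t => a + f t) y -> nontrivial y -> oscillatory y.
Proof.
  intros _ Ha12 _ Hf Hosc a Ha y Hsol _.
  assert (Hcrit : nu n ^ 2 < a1)
    by (apply nu_sqr_lt_of_euler_oscillatory, Hosc; lra).
  apply (oscillatory_of_coeff_eventually_above n _ y (a1 - nu n ^ 2) Hsol); [lra |].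
  destruct (Hf (a - a1)) as [M HM]; [lra |].
  exists M; intros t Ht.
  destruct (Rabs_def2 _ _ (HM t Ht)); lra.
Qed.
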